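(* Let $\mathbb{K}=(G_{\mathbb{K}},M_{\mathbb{K}},I_{\mathbb{K}})$ and $\mathbb{S}=(G_{\mathbb{S}},M_{\mathbb{S}},I_{\mathbb{S}})$ be formal contexts and let $\sigma\colon G_{\mathbb{K}}\to G_{\mathbb{S}}$ be a map. Define $I_\sigma\subseteq G_{\mathbb{K}}\times M_{\mathbb{S}}$ by $I_\sigma=\{(g,\sigma(g))\mid g\in G_{\mathbb{K}}\}\circ I_{\mathbb{S}}$, i.e. $(g,m)\in I_\sigma$ iff $(\sigma(g),m)\in I_{\mathbb{S}}$, and let $\mathbb{A}=\mathbb{K}\mid (G_{\mathbb{K}},M_{\mathbb{S}},I_\sigma)$ be the apposition. Then $\sigma$ is an $\mathbb{S}$-measure of $\mathbb{A}$ and $\mathrm{id}_{G_{\mathbb{K}}}$ is a $\mathbb{K}$-measure of $\mathbb{A}$.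
   Context: A formal context is a triple $(G,M,I)$ with $G$ a non-empty finite set (objects), $M$ a finite set (attributes) and $I\subseteq G\times M$. For $A\subseteq G$ let $A'=\{m\in M\mid \forall a\in A: (a,m)\in I\}$ and for $B\subseteq M$ let $B'=\{g\in G\mid \forall b\in B:(g,b)\in I\}$. An extent of $(G,M,I)$ is a set $A\subseteq G$ with $A''=A$; $\mathrm{Ext}(G,M,I)$ denotes the set of all extents. For formal contexts $\mathbb{K}=(G,M,I)$ and $\mathbb{S}=(G_{\mathbb{S}},M_{\mathbb{S}},I_{\mathbb{S}})$, a map $\sigma\colon G\to G_{\mathbb{S}}$ is an $\mathbb{S}$-measure of $\mathbb{K}$ iff for every $A\in\mathrm{Ext}(\mathbb{S})$ the preimage $\sigma^{-1}(A)=\{g\in G\mid \sigma(g)\in A\}$ is in $\mathrm{Ext}(\mathbb{K})$. The apposition of two contexts $(G,M_1,I_1)$ and $(G,M_2,I_2)$ on the same object set is $(G, M_1\cup M_2, I_1\cup I_2)$, where if $M_1\cap M_2\neq\emptyset$ the attribute sets are first made disjoint (disjoint union). *)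

From mathcomp Require Import all_boot.
Set Implicit Arguments. Unset Strict Implicit. Unset Printing Implicit Defensive.

Record context := Context {
  ctx_G : finType;
  ctx_M : finType;
  ctx_I : ctx_G -> ctx_M -> bool }.

Definition ext_prime (K : context) (A : {set ctx_G K}) : {set ctx_M K} :=
  [set m | [forall a in A, ctx_I a m]].
Definition int_prime (K : context) (B : {set ctx_M K}) : {set ctx_G K} :=
  [set g | [forall b in B, ctx_I g b]].

Definition is_extent (K : context) (A : {set ctx_G K}) : Prop :=
  int_prime (ext_prime A) = A.

Definition is_measure (K S : context) (sigma : ctx_G K -> ctx_G S) : Prop :=
  forall A : {set ctx_G S}, is_extent A -> is_extent (sigma @^-1: A).

Definition apposition (G M1 M2 : finType) (I1 : G -> M1 -> bool)
  (I2 : G -> M2 -> bool) : context :=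
  @Context G (M1 + M2)%type
    (fun g m => match m with inl m1 => I1 g m1 | inr m2 => I2 g m2 end).

Definition I_sigma (K S : context) (sigma : ctx_G K -> ctx_G S)
  (g : ctx_G K) (m : ctx_M S) : bool := ctx_I (sigma g) m.

Definition app_ctx (K S : context) (sigma : ctx_G K -> ctx_G S) : context :=
  @apposition (ctx_G K) (ctx_M K) (ctx_M S) (@ctx_I K) (I_sigma sigma).

From mathcomp Require Import all_boot.

(* Extents are exactly the sets of the form B', so a map is a measure as soon
   as the preimage of every such B' is the derivation of some attribute set
   of the source context.  In the apposition A, the derivation of the left attributes B is
   the derivation of B in K, and the derivation of the right attributes B is
   the preimage under sigma of the derivation of B in S. *)

Lemma forall_in_imset (aT rT : finType) (f : aT -> rT) (A : {set aT})
    (P : pred rT) :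
  [forall y in f @: A, P y] = [forall x in A, P (f x)].
Proof.
apply/forallP/forallP => [PfA x | PA y]; apply/implyP.
- by move=> Ax; apply: (implyP (PfA (f x))); rewrite imset_f.
- by case/imsetP=> x Ax ->; apply: (implyP (PA x)).
Qed.

Lemma extent_int_prime (C : context) (B : {set ctx_M C}) :
  is_extent (int_prime B).
Proof.
apply/setP=> g; rewrite !inE; apply/forallP/forallP => [gBB' b | gB m].
- apply/implyP=> Bb; apply: (implyP (gBB' b)).
  rewrite inE; apply/forallP=> h; apply/implyP.
  by rewrite inE => /forallP/(_ b)/implyP; apply.
- by apply/implyP; rewrite inE => /forallP/(_ g)/implyP; apply; rewrite inE; apply/forallP.
Qed.

Lemma measure_of_preim_int_prime (C S : context) (f : ctx_G C -> ctx_G S) :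
  (forall B : {set ctx_M S}, exists B' : {set ctx_M C},
     f @^-1: int_prime B = int_prime B') ->
  is_measure f.
Proof.
move=> preimB A extA; rewrite -extA.
by have [B' ->] := preimB (ext_prime A); apply: extent_int_prime.
Qed.

Section Apposition.

Variables (G M1 M2 : finType) (I1 : G -> M1 -> bool) (I2 : G -> M2 -> bool).

Lemma int_prime_apposition_inl (B : {set M1}) :
  @int_prime (apposition I1 I2) (inl @: B) = [set g | [forall b in B, I1 g b]].
Proof. by apply/setP=> g; rewrite !inE forall_in_imset. Qed.

Lemma int_prime_apposition_inr (B : {set M2}) :
  @int_prime (apposition I1 I2) (inr @: B) = [set g | [forall b in B, I2 g b]].
Proof. by apply/setP=> g; rewrite !inE forall_in_imset. Qed.

End Apposition.

Lemma preim_int_prime (T : finType) (S : context) (f : T -> ctx_G S)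
    (B : {set ctx_M S}) :
  f @^-1: int_prime B = [set g | [forall b in B, ctx_I (f g) b]].
Proof. by apply/setP=> g; rewrite !inE. Qed.

Theorem proposition2 (K S : context) (sigma : ctx_G K -> ctx_G S)
  (hGK : 0 < #|ctx_G K|) (hGS : 0 < #|ctx_G S|) :
  @is_measure (app_ctx sigma) S sigma /\
  @is_measure (app_ctx sigma) K (fun g : ctx_G K => g).
Proof.
split; apply: measure_of_preim_int_prime => B.
- by exists (inr @: B); rewrite int_prime_apposition_inr preim_int_prime.
- exists (inl @: B); rewrite int_prime_apposition_inl.
  by apply/setP=> g; rewrite !inE.
Qed.
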